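(* Consider the prefix code $C_\infty$ for $\mathcal{A}$ in which, for each $s\ge0$, writing $s=2^t-1+r$ with $t\ge0$ and $0\le r\le 2^t-1$, exactly $2^t-1-r$ of the $s+1$ pairs $(i,j)$ with $i+j=s$ receive codewords of length $(t-1)(s+2)+2r+2$ and the remaining $2r+1$ receive codewords of length $(t-1)(s+2)+2r+3$. Then for every $q\in(0,1)$ the expected codeword length of $C_\infty$ under $\mathrm{TDGD}(q)$ is $$\bar L_q(C_\infty)=1+\frac{1}{1-q}\sum_{t\ge0}q^{2^t}\big(2^t(1-q)+2\big).$$
   Context: $\mathcal{A}=\{(i,j):i,j\in\mathbb{Z}_{\ge0}\}$; $\mathrm{TDGD}(q)$ is the distribution $P(i,j)=(1-q)^2q^{i+j}$ on $\mathcal{A}$. *)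

From Stdlib Require Import Reals Lra Lia ZArith Arith List.
Import ListNotations.
Open Scope R_scope.

(* Codewords are binary strings; a code for A = N x N maps each pair to a word. *)
Definition word := list bool.

Definition is_prefix (u v : word) : Prop := exists w, v = u ++ w.

Definition prefix_code (C : nat * nat -> word) : Prop :=
  forall a b, a <> b -> ~ is_prefix (C a) (C b).

Definition tdgd (q : R) (a : nat * nat) : R := (1 - q) ^ 2 * q ^ (fst a + snd a).

(* s = 2^t - 1 + r with 0 <= r <= 2^t - 1, i.e. t = floor(log2 (s+1)). *)
Definition tt_of (s : nat) : nat := Nat.log2 (s + 1).
Definition rr_of (s : nat) : nat := s + 1 - 2 ^ tt_of s.

(* Short length (t-1)(s+2)+2r+2, computed in Z (t-1 may be -1 when s=0). *)
Definition short_len (s : nat) : Z :=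
  ((Z.of_nat (tt_of s) - 1) * (Z.of_nat s + 2) + 2 * Z.of_nat (rr_of s) + 2)%Z.

Definition n_short (s : nat) : nat := 2 ^ tt_of s - 1 - rr_of s.

(* The length profile of C_infinity: on each diagonal i+j=s exactly
   2^t-1-r pairs get length short_len s, all others get short_len s + 1. *)
Definition cinf_lengths (C : nat * nat -> word) : Prop :=
  forall s : nat,
    length (filter (fun i => Z.eqb (Z.of_nat (length (C (i, s - i)%nat))) (short_len s))
                   (seq 0 (s + 1))) = n_short s
    /\ forall i : nat, (i <= s)%nat ->
         Z.of_nat (length (C (i, s - i)%nat)) = short_len s \/
         Z.of_nat (length (C (i, s - i)%nat)) = (short_len s + 1)%Z.

Definition diag_term (q : R) (C : nat * nat -> word) (s : nat) : R :=
  fold_right Rplus 0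
    (map (fun i => tdgd q (i, s - i)%nat * INR (length (C (i, s - i)%nat))) (seq 0 (s + 1))).

From Stdlib Require Import Reals Lra Lia ZArith Arith List.
Open Scope R_scope.

(* Every pair on the diagonal i + j = N has probability (1-q)^2 q^N, so only the total
   codeword length f(N) of the diagonal matters.  Between consecutive powers of two f is
   quadratic: its second difference at k is 2 for every power of two 2^t <= k, plus 2^t
   when k = 2^t (and 1 at k = 0).  Summing by parts twice, the N-th partial sum of the
   expected length is 1 + (1/(1-q)) Sum_{2^t <= N} q^(2^t) (2^t (1-q) + 2) minus a
   boundary term q^(N+1) O(N^3), which vanishes as N grows. *)

Lemma dyadic_split (s : nat) :
  (2 ^ tt_of s + rr_of s = s + 1 /\ rr_of s < 2 ^ tt_of s)%nat.
Proof.
  unfold rr_of, tt_of.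
  destruct (Nat.log2_spec (s + 1)) as [Hlo Hhi]; [lia|].
  rewrite Nat.pow_succ_r' in Hhi. lia.
Qed.

(* [levels N] counts the [t] with [2 ^ t <= N]. *)
Definition levels (N : nat) : nat := Nat.log2_up (N + 1).

Lemma levels_split (N : nat) :
  levels N = if Nat.eqb (rr_of N) 0 then tt_of N else S (tt_of N).
Proof.
  destruct (dyadic_split N) as [Hsum Hr]. unfold levels.
  destruct (Nat.eqb_spec (rr_of N) 0) as [E|E].
  - replace (N + 1)%nat with (2 ^ tt_of N)%nat by lia. apply Nat.log2_up_pow2. lia.
  - apply Nat.log2_up_unique; [lia|]. rewrite Nat.pow_succ_r'. simpl Nat.pred. lia.
Qed.

Lemma levels_succ (N : nat) :
  levels (S N) = levels N \/ (levels (S N) = S (levels N) /\ 2 ^ levels N = S N)%nat.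
Proof.
  unfold levels. replace (S N + 1)%nat with (S (N + 1)) by lia.
  destruct (Nat.log2_up_succ_or (N + 1)) as [E|E]; [right|left; exact E].
  split; [exact E|].
  destruct (proj1 (Nat.log2_up_eq_succ_iff_pow2 (N + 1) ltac:(lia)) E) as [b Hb].
  rewrite Hb, Nat.log2_up_pow2 by lia. lia.
Qed.

Lemma levels_le (N : nat) : (levels N <= N + 1)%nat.
Proof. apply Nat.log2_up_le_lin. lia. Qed.

Lemma pow2_levels_le (N : nat) : (2 ^ levels N <= levels N * (N + 1) + 1)%nat.
Proof.
  unfold levels.
  destruct N as [|N]; [simpl; lia|].
  destruct (Nat.log2_up_spec (S N + 1) ltac:(lia)) as [Hlo _].
  assert (HK : (0 < Nat.log2_up (S N + 1))%nat) by (apply Nat.log2_up_pos; lia).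
  destruct (Nat.log2_up (S N + 1)) as [|[|P]]; [lia|simpl in *; lia|].
  rewrite Nat.pow_succ_r' in *. simpl Nat.pred in Hlo. nia.
Qed.

Lemma sum_map_scale (c : R) (f : nat -> R) (l : list nat) :
  fold_right Rplus 0 (map (fun i => c * f i) l) = c * fold_right Rplus 0 (map f l).
Proof. induction l as [|a l IH]; simpl; [ring|rewrite IH; ring]. Qed.

Lemma sum_two_valued (g : nat -> nat) (L : Z) (l : list nat) :
  (forall i, In i l -> Z.of_nat (g i) = L \/ Z.of_nat (g i) = (L + 1)%Z) ->
  fold_right Rplus 0 (map (fun i => INR (g i)) l)
  = INR (length l) * (IZR L + 1)
    - INR (length (filter (fun i => Z.eqb (Z.of_nat (g i)) L) l)).
Proof.
  induction l as [|a l IH]; intros Hg; cbn [map fold_right filter length].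
  - simpl. ring.
  - rewrite IH by (intros; apply Hg; right; auto).
    rewrite (INR_IZR_INZ (g a)).
    destruct (Hg a (or_introl eq_refl)) as [E|E]; rewrite E.
    + rewrite Z.eqb_refl. cbn [length]. rewrite !S_INR. ring.
    + replace (L + 1 =? L)%Z with false by (symmetry; apply Z.eqb_neq; lia).
      rewrite S_INR, plus_IZR. ring.
Qed.

Definition diag_len (N : nat) : R :=
  INR N + 1 + (INR N + 2) * (INR (levels N) * (INR N + 1) - 2 ^ levels N + 1).

Lemma diag_len_split (N : nat) :
  INR (N + 1) * (IZR (short_len N) + 1) - INR (n_short N) = diag_len N.
Proof.
  destruct (dyadic_split N) as [Hsum Hr].
  assert (Hshort : INR (n_short N) = INR (2 ^ tt_of N) - INR (rr_of N) - 1).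
  { unfold n_short. rewrite !minus_INR by lia. simpl. ring. }
  assert (Hlen : IZR (short_len N)
                 = (INR (tt_of N) - 1) * (INR N + 2) + 2 * INR (rr_of N) + 2).
  { unfold short_len.
    rewrite !plus_IZR, !mult_IZR, minus_IZR, plus_IZR, <- !INR_IZR_INZ. reflexivity. }
  assert (HN : INR N + 1 = 2 ^ tt_of N + INR (rr_of N)).
  { rewrite <- (pow_INR 2). change (INR 2) with 2.
    rewrite <- plus_INR, Hsum, plus_INR. simpl. ring. }
  rewrite Hshort, Hlen, pow_INR, plus_INR. change (INR 2) with 2. change (INR 1) with 1.
  unfold diag_len. rewrite levels_split.
  destruct (Nat.eqb_spec (rr_of N) 0) as [E|E].
  - rewrite E in HN |- *. simpl INR in *.
    replace (INR N) with (2 ^ tt_of N - 1) by lra. ring.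
  - rewrite S_INR. simpl pow.
    replace (INR N) with (2 ^ tt_of N + INR (rr_of N) - 1) by lra. ring.
Qed.

Lemma diag_term_eq (q : R) (C : nat * nat -> word) (N : nat) :
  cinf_lengths C -> diag_term q C N = (1 - q) ^ 2 * q ^ N * diag_len N.
Proof.
  intros HC. destruct (HC N) as [Hcount Hvals]. unfold diag_term.
  rewrite (map_ext_in _ (fun i => (1 - q) ^ 2 * q ^ N * INR (length (C (i, N - i)%nat)))).
  2:{ intros i Hi. apply in_seq in Hi. unfold tdgd. simpl fst; simpl snd.
      f_equal. f_equal. f_equal. lia. }
  rewrite sum_map_scale, <- diag_len_split. f_equal.
  rewrite (sum_two_valued (fun i => length (C (i, N - i)%nat)) (short_len N)).
  - rewrite Hcount, length_seq. reflexivity.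
  - intros i Hi. apply in_seq in Hi. apply Hvals. lia.
Qed.

Definition level_term (q : R) (t : nat) : R :=
  q ^ (2 ^ t) * (INR (2 ^ t) * (1 - q) + 2).

Fixpoint level_sum (q : R) (K : nat) : R :=
  match K with
  | O => 0
  | S k => level_sum q k + level_term q k
  end.

Lemma level_sum_succ (q : R) (n : nat) : level_sum q (S n) = sum_f_R0 (level_term q) n.
Proof. induction n as [|n IH]; simpl in *; [ring|rewrite <- IH; ring]. Qed.

(* [q ^ (N + 1) * tail_factor q N] is the boundary term left by summing by parts twice;
   its middle summand is the first difference [diag_len N - diag_len (N - 1)]. *)
Definition tail_factor (q : R) (N : nat) : R :=
  2 * INR (levels N) / (1 - q) + (2 + 2 * INR (levels N) * (INR N + 1) - 2 ^ levels N)
  + (1 - q) * diag_len N.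

Lemma diag_partial_sum (q : R) (C : nat * nat -> word) (N : nat) :
  q <> 1 -> cinf_lengths C ->
  sum_f_R0 (diag_term q C) N
  = 1 + level_sum q (levels N) / (1 - q) - q ^ (N + 1) * tail_factor q N.
Proof.
  intros Hq HC. assert (Hw : 1 - q <> 0) by lra.
  induction N as [|N IH].
  - simpl. rewrite diag_term_eq by exact HC.
    unfold tail_factor, diag_len. simpl. field. exact Hw.
  - simpl sum_f_R0. rewrite IH, diag_term_eq by exact HC.
    unfold tail_factor, diag_len.
    replace (S N + 1)%nat with (S (N + 1)) by lia.
    rewrite !S_INR. simpl pow. rewrite pow_add, pow_1.
    destruct (levels_succ N) as [E|[E Hpow]]; rewrite E.
    + field. exact Hw.
    + simpl level_sum. unfold level_term. rewrite Hpow.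
      assert (H2 : 2 ^ levels N = INR N + 1).
      { rewrite <- (pow_INR 2), Hpow, S_INR. reflexivity. }
      rewrite H2, S_INR. simpl pow. rewrite H2, S_INR. field. exact Hw.
Qed.

Lemma pow_root_exists (q : R) (k : nat) :
  0 < q < 1 -> exists s, 0 < s < 1 /\ s ^ S k = q.
Proof.
  intros Hq. exists (Rpower q (/ INR (S k))).
  assert (Hk : 0 < INR (S k)) by apply lt_0_INR, Nat.lt_0_succ.
  split; [split|].
  - apply exp_pos.
  - unfold Rpower. rewrite <- exp_0. apply exp_increasing.
    assert (ln q < 0) by (rewrite <- ln_1; apply ln_increasing; lra).
    assert (0 < / INR (S k)) by (apply Rinv_0_lt_compat; lra). nra.
  - rewrite <- Rpower_pow by apply exp_pos. rewrite Rpower_mult, Rinv_l by lra.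
    apply Rpower_1. lra.
Qed.

Lemma bernoulli_ineq (h : R) (n : nat) : 0 <= h -> 1 + INR n * h <= (1 + h) ^ n.
Proof.
  intros Hh. induction n as [|n IH]; [simpl; lra|].
  rewrite S_INR. cbn [pow]. assert (0 <= INR n) by apply pos_INR. nra.
Qed.

Lemma INR_mul_pow_le (r : R) (n : nat) : 0 < r < 1 -> INR n * r ^ n <= r / (1 - r).
Proof.
  intros Hr. set (h := (1 - r) / r).
  assert (Hh : 0 < h) by (apply Rdiv_lt_0_compat; lra).
  assert (Hrh : r ^ n * (1 + h) ^ n = 1).
  { rewrite <- Rpow_mult_distr. replace (r * (1 + h)) with 1 by (unfold h; field; lra).
    apply pow1. }
  pose proof (bernoulli_ineq h n (Rlt_le _ _ Hh)).
  assert (0 < r ^ n) by (apply pow_lt; lra).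
  replace (r / (1 - r)) with (/ h) by (unfold h; field; lra).
  apply (Rmult_le_reg_l h); [lra|]. rewrite Rinv_r by lra. nra.
Qed.

(* Writing [q = s ^ (k + 1)] gives [n ^ k q ^ n = (n s ^ n) ^ k s ^ n]. *)
Lemma pow_mul_geom_dominated (q : R) (k : nat) : 0 < q < 1 ->
  exists c s, q <= s < 1 /\ forall n, INR n ^ k * q ^ n <= c * s ^ n.
Proof.
  intros Hq. destruct (pow_root_exists q k Hq) as [s [Hs Hsq]].
  exists ((s / (1 - s)) ^ k), s. split.
  { rewrite <- Hsq. simpl. pose proof (pow_incr s 1 k). rewrite pow1 in *.
    assert (0 <= s ^ k) by (apply pow_le; lra). nra. }
  intros n.
  assert (Hsn : 0 < s ^ n) by (apply pow_lt; lra).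
  assert (E : INR n ^ k * q ^ n = (INR n * s ^ n) ^ k * s ^ n).
  { rewrite <- Hsq, <- pow_mult, Nat.mul_comm, pow_mult, Rpow_mult_distr. simpl. ring. }
  rewrite E. apply Rmult_le_compat_r; [lra|]. apply pow_incr. split.
  - apply Rmult_le_pos; [apply pos_INR|lra].
  - apply INR_mul_pow_le. exact Hs.
Qed.

Lemma Un_cv_const (c : R) : Un_cv (fun _ => c) c.
Proof. intros eps Heps. exists O. intros n _. rewrite Rdist_eq. lra. Qed.

Lemma Un_cv_squeeze0 (u v : nat -> R) :
  (forall n, 0 <= u n <= v n) -> Un_cv v 0 -> Un_cv u 0.
Proof.
  intros Huv Hv eps Heps. destruct (Hv eps Heps) as [N HN]. exists N. intros n Hn.
  specialize (HN n Hn). specialize (Huv n). unfold Rdist in *.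
  rewrite Rminus_0_r, Rabs_pos_eq in * by lra. lra.
Qed.

Lemma Un_cv_geom0 (c s : R) : 0 < s < 1 -> Un_cv (fun n => c * s ^ n) 0.
Proof.
  intros Hs. replace 0 with (c * 0) by ring. apply CV_mult; [apply Un_cv_const|].
  intros eps Heps. destruct (pow_lt_1_zero s ltac:(rewrite Rabs_pos_eq; lra) eps Heps)
    as [N HN].
  exists N. intros n Hn. unfold Rdist. rewrite Rminus_0_r. exact (HN n Hn).
Qed.

Lemma Un_cv_geom_series (c s : R) : 0 < s < 1 ->
  Un_cv (sum_f_R0 (fun n => c * s ^ n)) (c * / (1 - s)).
Proof.
  intros Hs.
  apply Un_cv_ext with (fun N => c * sum_f_R0 (fun n => 1 * s ^ n) N).
  - intros N. rewrite scal_sum. apply sum_eq. intros i _. ring.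
  - apply CV_mult; [apply Un_cv_const|]. apply GP_infinite. rewrite Rabs_pos_eq; lra.
Qed.

Lemma Un_cv_pow_mul_geom (q : R) (k : nat) : 0 < q < 1 ->
  Un_cv (fun n => INR n ^ k * q ^ n) 0.
Proof.
  intros Hq. destruct (pow_mul_geom_dominated q k Hq) as [c [s [Hs Hdom]]].
  apply (Un_cv_squeeze0 _ (fun n => c * s ^ n)); [|apply Un_cv_geom0; lra].
  intros n. split; [|apply Hdom].
  apply Rmult_le_pos; apply pow_le; [apply pos_INR|lra].
Qed.

Lemma Un_cv_comp_unbounded (u : nat -> R) (l : R) (f : nat -> nat) :
  Un_cv u l -> (forall M, exists N, forall n, (N <= n)%nat -> (M <= f n)%nat) ->
  Un_cv (fun n => u (f n)) l.
Proof.
  intros Hu Hf eps Heps. destruct (Hu eps Heps) as [M HM].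
  destruct (Hf M) as [N HN]. exists N. intros n Hn. apply HM, HN, Hn.
Qed.

Lemma level_series_cv (q : R) : 0 < q < 1 ->
  exists S, Un_cv (sum_f_R0 (level_term q)) S.
Proof.
  intros Hq. destruct (pow_mul_geom_dominated q 1 Hq) as [c [s [Hs Hdom]]].
  assert (Hbound : forall t, 0 <= level_term q t <= (c + 2) * s ^ t).
  { intros t. unfold level_term. set (m := (2 ^ t)%nat).
    assert (Htm : (t <= m)%nat) by apply Nat.lt_le_incl, Nat.pow_gt_lin_r, Nat.lt_1_2.
    assert (Hm : 0 <= INR m) by apply pos_INR.
    assert (Hqm : 0 <= q ^ m <= s ^ m) by (split; [apply pow_le|apply pow_incr]; lra).
    assert (Hsm : s ^ m <= s ^ t).
    { replace m with (t + (m - t))%nat by lia. rewrite pow_add.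
      pose proof (pow_incr s 1 (m - t)). rewrite pow1 in *.
      assert (0 <= s ^ t) by (apply pow_le; lra). nra. }
    assert (Hc : 0 <= c) by (specialize (Hdom O); simpl in Hdom; lra).
    specialize (Hdom m). rewrite pow_1 in Hdom.
    assert (INR m * q ^ m * (1 - q) <= INR m * q ^ m).
    { assert (0 <= INR m * q ^ m) by (apply Rmult_le_pos; lra). nra. }
    assert (c * s ^ m <= c * s ^ t) by (apply Rmult_le_compat_l; lra).
    split; [apply Rmult_le_pos; nra|].
    replace (q ^ m * (INR m * (1 - q) + 2)) with (INR m * q ^ m * (1 - q) + 2 * q ^ m)
      by ring.
    lra. }
  destruct (Rseries_CV_comp (level_term q) (fun t => (c + 2) * s ^ t) Hbound) as [S HS].
  - exists ((c + 2) * / (1 - s)). apply Un_cv_geom_series. lra.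
  - exists S. exact HS.
Qed.

Lemma levels_unbounded (M : nat) : exists N, forall n, (N <= n)%nat -> (M <= levels n)%nat.
Proof.
  exists (2 ^ M)%nat. intros n Hn. unfold levels.
  rewrite <- (Nat.log2_up_pow2 M) at 1 by lia. apply Nat.log2_up_le_mono. lia.
Qed.

Lemma tail_factor_bounds (q : R) (N : nat) : 0 < q < 1 ->
  0 <= tail_factor q N <= 9 / (1 - q) * INR (N + 1) ^ 3.
Proof.
  intros Hq. pose proof (pow2_levels_le N) as Hpow. pose proof (levels_le N) as HK.
  assert (Hw : 0 < 1 - q < 1) by lra.
  rewrite plus_INR. change (INR 1) with 1.
  unfold tail_factor, diag_len. set (K := levels N) in *. set (m := INR N + 1).
  assert (Hm : 1 <= m) by (pose proof (pos_INR N); unfold m; lra).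
  assert (HKm : 0 <= INR K <= m).
  { split; [apply pos_INR|]. unfold m. rewrite <- (INR_1), <- plus_INR. apply le_INR, HK. }
  assert (HP : 1 <= 2 ^ K <= INR K * m + 1).
  { split; [apply pow_R1_Rle; lra|].
    apply le_INR in Hpow. rewrite plus_INR, mult_INR, plus_INR, pow_INR in Hpow.
    exact Hpow. }
  replace (INR N + 2) with (m + 1) by (unfold m; ring). fold m.
  set (P := 2 ^ K) in *. set (k := INR K) in *. set (w := 1 - q) in *.
  assert (Hinv : 1 <= / w) by (rewrite <- Rinv_1; apply Rinv_le_contravar; lra).
  assert (Hm3 : 1 <= m /\ m <= m ^ 3 /\ m * m <= m ^ 3) by (simpl; nra).
  assert (Hkm : 0 <= k * m <= m * m) by nra.
  set (D := m + (m + 1) * (k * m - P + 1)).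
  assert (HD : 0 <= D <= 3 * m ^ 3) by (unfold D; simpl in Hm3 |- *; nra).
  assert (HwD : 0 <= w * D <= D) by nra.
  assert (Hka : 0 <= 2 * k * / w <= 2 * m ^ 3 * / w) by nra.
  assert (H3 : 3 * m ^ 3 <= 3 * m ^ 3 * / w) by nra.
  split; nra.
Qed.

Lemma tail_cv0 (q : R) : 0 < q < 1 ->
  Un_cv (fun N => q ^ (N + 1) * tail_factor q N) 0.
Proof.
  intros Hq.
  apply (Un_cv_squeeze0 _ (fun N => 9 / (1 - q) * (INR (N + 1) ^ 3 * q ^ (N + 1)))).
  - intros N. destruct (tail_factor_bounds q N Hq) as [Hlo Hhi].
    assert (0 <= q ^ (N + 1)) by (apply pow_le; lra).
    split; [apply Rmult_le_pos; lra|].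
    rewrite Rmult_comm, <- Rmult_assoc. apply Rmult_le_compat_r; assumption.
  - replace 0 with (9 / (1 - q) * 0) by ring. apply CV_mult; [apply Un_cv_const|].
    apply (CV_shift' (fun n => INR n ^ 3 * q ^ n) 1). apply Un_cv_pow_mul_geom, Hq.
Qed.

Theorem corollary5 :
  forall (C : nat * nat -> word), prefix_code C -> cinf_lengths C ->
  forall q : R, 0 < q < 1 ->
  exists S : R,
    infinite_sum (fun t : nat => q ^ (2 ^ t) * (INR (2 ^ t) * (1 - q) + 2)) S /\
    infinite_sum (diag_term q C) (1 + S / (1 - q)).
Proof.
  intros C _ HC q Hq.
  destruct (level_series_cv q Hq) as [S HS].
  exists S. split; [exact HS|].
  assert (Hlevels : Un_cv (fun N => level_sum q (levels N)) S).
  { apply Un_cv_comp_unbounded; [|exact levels_unbounded].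
    apply (CV_shift _ 1). apply Un_cv_ext with (sum_f_R0 (level_term q)); [|exact HS].
    intros n. rewrite Nat.add_1_r. symmetry. apply level_sum_succ. }
  apply Un_cv_ext with
    (fun N => 1 + level_sum q (levels N) / (1 - q) - q ^ (N + 1) * tail_factor q N).
  { intros N. symmetry. apply diag_partial_sum; [lra|exact HC]. }
  replace (1 + S / (1 - q)) with (1 + S * / (1 - q) - 0) by (unfold Rdiv; ring).
  apply CV_minus; [|apply tail_cv0, Hq].
  apply CV_plus; [apply Un_cv_const|].
  apply CV_mult; [exact Hlevels|apply Un_cv_const].
Qed.
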